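(* Let $n\ge 2$. The completely isolated subsemigroups of $\mathcal{PI}^{\ast}_n$ are exactly $\mathcal{PI}^{\ast}_n$, $\mathcal{S}_n$ and $\mathcal{PI}^{\ast}_n\setminus\mathcal{S}_n$.
   Context: Let $X=\{1,\dots,n\}$, $X'=\{1',\dots,n'\}$. $\mathcal{PI}^{\ast}_n$ is the set of partitions of $X\cup X'$ each of whose blocks is a singleton (point) or a generalised line (a set meeting both $X$ and $X'$), with product $\star$: with $X''$ a third copy of $X$, regard $\alpha$ as a partition of $X\cup X''$ and $\beta$ as a partition of $X''\cup X'$, let $\sim$ be the equivalence on $X\cup X''\cup X'$ generated by the blocks of both; $\alpha\star\beta$ is the partition of $X\cup X'$ in which distinct $u,v$ are in one block iff $u\sim v$ and the $\sim$-class of $u$ contains no singleton block of $\alpha$ or $\beta$. $\mathcal{S}_n$ is its group of units: elements all of whose blocks are $\{x,\pi(x)'\}$ for a permutation $\pi$. A subsemigroup $T$ of a semigroup $S$ is completely isolated if for all $a,b\in S$, $ab\in T$ implies $a\in T$ or $b\in T$. *)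

From mathcomp Require Import all_boot all_fingroup.
Set Implicit Arguments. Unset Strict Implicit. Unset Printing Implicit Defensive.

(* X ∪ X' : inl x = x ∈ X, inr x = x' ∈ X'. *)
Definition pt (n : nat) : finType := ('I_n + 'I_n)%type.

Definition part (n : nat) : finType := {set {set pt n}}.

(* Elements of PI*_n: partitions of X ∪ X' whose blocks are points
   (singletons) or generalised lines (meeting both X and X'). *)
Definition isPI (n : nat) (a : part n) : bool :=
  partition a [set: pt n] &&
  [forall B in a, (#|B| == 1) ||
     ([exists x : 'I_n, inl x \in B] && [exists y : 'I_n, inr y \in B])].

Definition PIset (n : nat) : {set part n} := [set a | isPI a].

Definition isUnit (n : nat) (a : part n) : bool :=
  [exists p : 'S_n, a == [set [set (inl x : pt n); inr (p x)] | x : 'I_n]].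

(* Three copies X, X'', X' :  inl (inl x) = x, inl (inr x) = x'', inr x = x'. *)
Definition vt (n : nat) : finType := (('I_n + 'I_n) + 'I_n)%type.

(* alpha as a partition of X ∪ X'' *)
Definition embA n (u : pt n) : vt n :=
  match u with inl x => inl (inl x) | inr x => inl (inr x) end.
(* beta as a partition of X'' ∪ X' *)
Definition embB n (u : pt n) : vt n :=
  match u with inl x => inl (inr x) | inr x => inr x end.
Definition embO n (u : pt n) : vt n :=
  match u with inl x => inl (inl x) | inr x => inr x end.

Definition genrel n (a b : part n) : rel (vt n) := fun u v =>
  [exists B in a, (u \in (@embA n) @: B) && (v \in (@embA n) @: B)] ||
  [exists B in b, (u \in (@embB n) @: B) && (v \in (@embB n) @: B)].

Definition singpt n (a b : part n) (w : vt n) : bool :=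
  [exists B in a, (#|B| == 1) && (w \in (@embA n) @: B)] ||
  [exists B in b, (#|B| == 1) && (w \in (@embB n) @: B)].

Definition badpt n (a b : part n) (w : vt n) : bool :=
  [exists z, connect (genrel a b) w z && singpt a b z].

Definition relstar n (a b : part n) (u v : pt n) : bool :=
  (u == v) ||
  (connect (genrel a b) (embO u) (embO v) && ~~ badpt a b (embO u)).

Definition star n (a b : part n) : part n :=
  [set [set v | relstar a b u v] | u : pt n].

(* completely isolated subsemigroup of PI*_n (subsemigroups nonempty) *)
Definition compl_isolated_subsemigroup n (T : {set part n}) : Prop :=
  [/\ T \subset PIset n, T != set0,
      (forall a b, a \in T -> b \in T -> star a b \in T) &
      (forall a b, a \in PIset n -> b \in PIset n ->
                   star a b \in T -> (a \in T) || (b \in T))].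

From mathcomp Require Import all_boot all_fingroup.
Set Implicit Arguments. Unset Strict Implicit. Unset Printing Implicit Defensive.

(* The units are the partitions perm_part g, and a product a * b is a unit only
   if a is one, so S_n and its complement are completely isolated.
   Conversely, let T be completely isolated.  A predicate on a finite group that
   is closed under products and completely isolated is constant, so T contains
   all units or none, and left multiplication by a unit preserves membership
   in T.  If a is not the zero (all blocks points) but has a point, then for a
   suitable unit g the elements a and g * a have the same membership, hence so
   does a * (g * a), which has strictly more points; by induction, an element
   with a point lies in T iff zero does.  A non-unit without points has a
   block meeting X twice, and then factors as a product of two elements with
   points.  So membership in T only depends on being a unit. *)

Section PartitionT.
Variables (T : finType) (P : {set {set T}}).
Hypothesis partP : partition P setT.

Lemma mem_pblockT x : x \in pblock P x.
Proof. by rewrite mem_pblock (cover_partition partP) inE. Qed.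

Lemma pblockT_mem x : pblock P x \in P.
Proof. by rewrite pblock_mem // (cover_partition partP) inE. Qed.

Lemma same_pblockT x y : y \in pblock P x -> pblock P y = pblock P x.
Proof. by apply: same_pblock; case/and3P: partP. Qed.

Lemma def_pblockT B x : B \in P -> x \in B -> pblock P x = B.
Proof. by apply: def_pblock; case/and3P: partP. Qed.

Lemma eq_pblockT x y : (pblock P x == pblock P y) = (y \in pblock P x).
Proof.
by rewrite eq_pblock ?(cover_partition partP) ?inE //; case/and3P: partP.
Qed.

Lemma pblockT_card1 B x : B \in P -> #|B| == 1 -> x \in B -> pblock P x = [set x].
Proof.
move=> PB /cards1P[y defB]; rewrite defB inE => /eqP ->.
by apply: def_pblockT; [rewrite -defB | rewrite set11].
Qed.

End PartitionT.

Lemma eq_partitionT (T : finType) (P Q : {set {set T}}) :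
  partition P setT -> partition Q setT ->
  (forall x y, (y \in pblock P x) = (y \in pblock Q x)) -> P = Q.
Proof.
move=> partP partQ PQ.
rewrite -(equivalence_partition_pblock partP) -(equivalence_partition_pblock partQ).
by apply: eq_imset => x; apply/setP => y; rewrite !inE PQ.
Qed.

Lemma pblock_preim (T : finType) (K : eqType) (f : T -> K) x y :
  (y \in pblock (preim_partition f setT) x) = (f x == f y).
Proof.
rewrite pblock_equivalence_partition ?inE //.
by move=> ? ? ? _ _ _; split=> // /eqP ->.
Qed.

Lemma eq_pblock_preim (T : finType) (K : eqType) (f : T -> K) x y :
  (pblock (preim_partition f setT) x == pblock (preim_partition f setT) y) =
  (f x == f y).
Proof. by rewrite eq_pblockT ?pblock_preim //; apply: preim_partitionP. Qed.

Lemma mulg_closed_invg (gT : finGroupType) (P : pred gT) :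
  P 1%g -> (forall g h, P g -> P h -> P (g * h)%g) -> forall g, P g -> P g^-1%g.
Proof.
move=> P1 PM g Pg; rewrite invg_expg.
by elim: #[g]%g.-1 => [|k IH]; rewrite ?expg0 ?expgS ?PM.
Qed.

Lemma isolated_mulg_closed_const (gT : finGroupType) (P : pred gT) :
  (forall g h, P g -> P h -> P (g * h)%g) ->
  (forall g h, P (g * h)%g -> P g || P h) -> forall g, P g = P 1%g.
Proof.
move=> PM Piso g; have [P1|nP1] := boolP (P 1%g).
  have /Piso/orP[//|Pgi] : P (g * g^-1)%g by rewrite mulgV.
  by rewrite -[g]invgK mulg_closed_invg.
apply/negbTE/negP => Pg; have nPM h k : ~~ P h -> ~~ P k -> ~~ P (h * k)%g.
  by move=> nPh nPk; apply: contra (Piso h k) _; rewrite negb_or nPh.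
have nPgi : ~~ P g^-1%g by apply: contra nP1 => Pgi; rewrite -(mulgV g) PM.
by move: (mulg_closed_invg (P := predC P) nP1 nPM nPgi); rewrite invgK /= Pg.
Qed.

Section Star.
Variable n : nat.
Implicit Types (a b c : part n) (u v : pt n) (w : vt n).

Lemma genrel_sym a b : symmetric (genrel a b).
Proof.
by move=> w1 w2; congr orb; apply: eq_existsb => B; rewrite [X in _ && X]andbC.
Qed.

Lemma connect_genrel_sym a b : connect_sym (genrel a b).
Proof. exact/sym_connect_sym/genrel_sym. Qed.

Lemma badpt_connect a b w1 w2 :
  connect (genrel a b) w1 w2 -> badpt a b w1 = badpt a b w2.
Proof.
move=> c12; apply: eq_existsb => z.
by rewrite (same_connect (connect_genrel_sym a b) c12).
Qed.

Lemma relstar_equiv a b : equivalence_rel (relstar a b).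
Proof.
move=> u v w; split; first by rewrite /relstar eqxx.
rewrite /relstar; case: (eqVneq u v) => [-> //|_] /= /andP[cuv nbad].
rewrite -(badpt_connect cuv) (negbTE nbad) !andbT.
rewrite (same_connect (connect_genrel_sym a b) cuv).
case: (eqVneq u w) => [<-|_] /=; last by case: eqVneq => [<-|]; rewrite ?connect0.
by rewrite -(same_connect (connect_genrel_sym a b) cuv) connect0 orbT.
Qed.

Lemma star_partition a b : partition (star a b) setT.
Proof.
have -> : star a b = equivalence_partition (relstar a b) setT.
  apply/setP => B; apply/imsetP/imsetP => -[u _ ->]; exists u => //;
  by apply/setP => v; rewrite !inE.
by apply: equivalence_partitionP => u v w _ _ _; apply: relstar_equiv.
Qed.

Lemma pblock_star a b u v : (v \in pblock (star a b) u) = relstar a b u v.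
Proof.
have ustar : [set v | relstar a b u v] \in star a b by apply: imset_f.
by rewrite (def_pblockT (star_partition a b) ustar) inE // /relstar eqxx.
Qed.

Lemma star_eq a b c : partition c setT ->
  (forall u v, relstar a b u v = (v \in pblock c u)) -> star a b = c.
Proof.
move=> pc E; apply: eq_partitionT (star_partition a b) pc _ => u v.
by rewrite pblock_star E.
Qed.

Lemma genrelA a b u v :
  partition a setT -> v \in pblock a u -> genrel a b (embA u) (embA v).
Proof.
move=> pa uv; apply/orP; left; apply/existsP; exists (pblock a u).
by rewrite pblockT_mem // !imset_f // mem_pblockT.
Qed.

Lemma genrelB a b u v :
  partition b setT -> v \in pblock b u -> genrel a b (embB u) (embB v).
Proof.
move=> pb uv; apply/orP; right; apply/existsP; exists (pblock b u).
by rewrite pblockT_mem // !imset_f // mem_pblockT.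
Qed.

Lemma genrelE a b w1 w2 :
  partition a setT -> partition b setT -> genrel a b w1 w2 ->
  (exists u v, [/\ v \in pblock a u, w1 = embA u & w2 = embA v]) \/
  (exists u v, [/\ v \in pblock b u, w1 = embB u & w2 = embB v]).
Proof.
move=> pa pb /orP[] /existsP[B /and3P[PB /imsetP[u uB ->] /imsetP[v vB ->]]].
  by left; exists u, v; rewrite (def_pblockT pa PB uB).
by right; exists u, v; rewrite (def_pblockT pb PB uB).
Qed.

Definition points c := [set u | pblock c u == [set u]].

Lemma pointsP c u : reflect (pblock c u = [set u]) (u \in points c).
Proof. by rewrite inE; apply: eqP. Qed.

Lemma singptE a b w :
  partition a setT -> partition b setT -> singpt a b w ->
  (exists2 u, u \in points a & w = embA u) \/
  (exists2 u, u \in points b & w = embB u).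
Proof.
move=> pa pb /orP[] /existsP[B /and3P[PB B1 /imsetP[u uB ->]]].
  by left; exists u => //; apply/pointsP/(pblockT_card1 pa PB B1).
by right; exists u => //; apply/pointsP/(pblockT_card1 pb PB B1).
Qed.

Lemma singptA a b u : partition a setT -> u \in points a -> singpt a b (embA u).
Proof.
move=> pa /pointsP ua; apply/orP; left; apply/existsP; exists (pblock a u).
by rewrite pblockT_mem // ua cards1 eqxx imset_f ?set11.
Qed.

Lemma singptB a b u : partition b setT -> u \in points b -> singpt a b (embB u).
Proof.
move=> pb /pointsP ub; apply/orP; right; apply/existsP; exists (pblock b u).
by rewrite pblockT_mem // ub cards1 eqxx imset_f ?set11.
Qed.

Lemma singpt_badpt a b w : singpt a b w -> badpt a b w.
Proof. by move=> sw; apply/existsP; exists w; rewrite connect0. Qed.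

Lemma badpt_points_star a b u : badpt a b (embO u) -> u \in points (star a b).
Proof.
move=> bad; apply/pointsP/setP => v.
by rewrite pblock_star /relstar bad andbF orbF inE eq_sym.
Qed.

Lemma relstar_pblock (f : pt n -> pt n) a b c u v :
  injective f -> partition c setT ->
  connect (genrel a b) (embO u) (embO v) = (pblock c (f u) == pblock c (f v)) ->
  badpt a b (embO u) = (f u \in points c) ->
  relstar a b u v = (f v \in pblock c (f u)).
Proof.
move=> f_inj pc conn bad; rewrite /relstar conn bad eq_pblockT //.
have [/pointsP ->|_] := boolP (f u \in points c); rewrite ?andbF ?andbT ?orbF.
  by rewrite inE (inj_eq f_inj) eq_sym.
by case: eqVneq => [<-|] //=; rewrite mem_pblockT.
Qed.

Section Retraction.
Variables (a b : part n) (r : vt n -> pt n).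
Hypotheses (pb : partition b setT)
  (r_genrel : forall w1 w2, genrel a b w1 w2 -> pblock b (r w1) = pblock b (r w2))
  (connect_r : forall w, connect (genrel a b) w (embB (r w))).

Lemma connect_genrel_retract w1 w2 :
  connect (genrel a b) w1 w2 = (pblock b (r w1) == pblock b (r w2)).
Proof.
apply/idP/eqP => [/connectP[p + ->]|e].
  by elim: p w1 => //= w p IH w1 /andP[/r_genrel -> /IH].
apply: connect_trans (connect_r w1) _; rewrite connect_genrel_sym.
apply: connect_trans (connect_r w2) _; apply/connect1/genrelB => //.
by rewrite -e mem_pblockT.
Qed.

Lemma badpt_retract w :
  badpt a b w = [exists z, (pblock b (r w) == pblock b (r z)) && singpt a b z].
Proof. by apply: eq_existsb => z; rewrite connect_genrel_retract. Qed.

End Retraction.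

Lemma PI_partition c : isPI c -> partition c setT.
Proof. by case/andP. Qed.

Lemma PI_line c u : isPI c -> u \notin points c ->
  (exists x, inl x \in pblock c u) /\ (exists y, inr y \in pblock c u).
Proof.
case/andP=> pc /forallP/(_ (pblock c u)); rewrite pblockT_mem //= => /orP[c1|].
  by rewrite inE (pblockT_card1 pc (pblockT_mem pc u) c1 (mem_pblockT pc u)) eqxx.
by case/andP=> /existsP[x ?] /existsP[y ?] _; split; [exists x | exists y].
Qed.

Lemma PI_pblock c : partition c setT ->
  (forall u, u \in points c \/
     (exists x, inl x \in pblock c u) /\ (exists y, inr y \in pblock c u)) -> isPI c.
Proof.
move=> pc line; apply/andP; split => //; apply/forallP => B; apply/implyP => cB.
have /set0Pn[u uB] := partition_neq0 pc cB.
rewrite -(def_pblockT pc cB uB); case: (line u) => [/pointsP ->|[[x ?] [y ?]]].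
  by rewrite cards1.
by apply/orP; right; apply/andP; split; apply/existsP; [exists x | exists y].
Qed.

Lemma not_badpt_embA a b u : isPI a -> ~~ badpt a b (embA u) ->
  (exists x, connect (genrel a b) (embA u) (inl (inl x))) /\
  (exists y, connect (genrel a b) (embA u) (inl (inr y))).
Proof.
move=> PIa nbad; have pa := PI_partition PIa.
have /(PI_line PIa)[[x ux] [y uy]] : u \notin points a.
  by apply: contra nbad => ua; apply/singpt_badpt/singptA.
by split; [exists x; apply: connect1 (genrelA _ pa ux) |
  exists y; apply: connect1 (genrelA _ pa uy)].
Qed.

Lemma not_badpt_embB a b u : isPI b -> ~~ badpt a b (embB u) ->
  (exists x, connect (genrel a b) (embB u) (inl (inr x))) /\
  (exists y, connect (genrel a b) (embB u) (inr y)).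
Proof.
move=> PIb nbad; have pb := PI_partition PIb.
have /(PI_line PIb)[[x ux] [y uy]] : u \notin points b.
  by apply: contra nbad => ub; apply/singpt_badpt/singptB.
by split; [exists x; apply: connect1 (genrelB _ pb ux) |
  exists y; apply: connect1 (genrelB _ pb uy)].
Qed.

Lemma star_PI a b : isPI a -> isPI b -> isPI (star a b).
Proof.
move=> PIa PIb; apply: PI_pblock (star_partition a b) _ => u.
have [bad|nbad] := boolP (badpt a b (embO u)); first by left; apply: badpt_points_star.
right; have nbadC w : connect (genrel a b) (embO u) w -> ~~ badpt a b w.
  by move=> cuw; rewrite -(badpt_connect cuw).
suff [[x cx] [y cy]] : (exists x, connect (genrel a b) (embO u) (inl (inl x))) /\
    (exists y, connect (genrel a b) (embO u) (inr y)).
  by split; [exists x | exists y]; rewrite pblock_star /relstar /= ?cx ?cy nbad orbT.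
case: u nbad nbadC => [x0|y0] nbad nbadC.
  split; first by exists x0; apply: connect0.
  have [_ [y cy]] := not_badpt_embA (u := inl x0) PIa nbad.
  have [_ [y' cy']] := not_badpt_embB (u := inl y) PIb (nbadC _ cy).
  by exists y'; apply: connect_trans cy cy'.
split; last by exists y0; apply: connect0.
have [[y cy] _] := not_badpt_embB (u := inr y0) PIb nbad.
have [[x cx] _] := not_badpt_embA (u := inr y) PIa (nbadC _ cy).
by exists x; apply: connect_trans cy cx.
Qed.

End Star.

Section PermPart.
Variable n : nat.
Implicit Types (a b c : part n) (u v : pt n) (w : vt n) (g h : 'S_n).

Definition perm_part g : part n := [set [set (inl x : pt n); inr (g x)] | x : 'I_n].

Definition perm_key g u : 'I_n := match u with inl x => x | inr y => (g^-1)%g y end.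

Definition perm_inl g u : pt n := match u with inl x => inl (g x) | inr y => inr y end.

Definition zero_part : part n := preim_partition id setT.

Lemma isUnitP a : reflect (exists g, a = perm_part g) (isUnit a).
Proof. by apply: (iffP existsP) => -[g /eqP]; exists g. Qed.

Lemma perm_partE g : perm_part g = preim_partition (perm_key g) setT.
Proof.
have block x : [set (inl x : pt n); inr (g x)] = [set v in setT | x == perm_key g v].
  apply/setP => -[x'|y]; rewrite !inE /=; first by rewrite orbF eq_sym.
  by rewrite -(inj_eq (@perm_inj _ g)) permKV eq_sym.
apply/setP => B; apply/imsetP/imsetP => [[x _ ->]|[u _ ->]].
  by exists (inl x); rewrite ?block.
by exists (perm_key g u); rewrite // block; apply/setP => v; rewrite !inE.
Qed.

Lemma perm_part_partition g : partition (perm_part g) setT.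
Proof. by rewrite perm_partE; apply: preim_partitionP. Qed.

Lemma pblock_perm_part g u v :
  (v \in pblock (perm_part g) u) = (perm_key g u == perm_key g v).
Proof. by rewrite perm_partE pblock_preim. Qed.

Lemma perm_part_PI g : isPI (perm_part g).
Proof.
apply: PI_pblock (perm_part_partition g) _ => u; right.
by split; [exists (perm_key g u) | exists (g (perm_key g u))];
  rewrite pblock_perm_part //= permK.
Qed.

Lemma perm_part_points g u : u \notin points (perm_part g).
Proof.
apply/pointsP => ug.
have : inl (perm_key g u) \in pblock (perm_part g) u by rewrite pblock_perm_part.
have : inr (g (perm_key g u)) \in pblock (perm_part g) u.
  by rewrite pblock_perm_part /= permK.
by rewrite ug !inE => /eqP <-.
Qed.

Lemma zero_part_partition : partition zero_part setT.
Proof. exact: preim_partitionP. Qed.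

Lemma zero_part_points u : u \in points zero_part.
Proof. by apply/pointsP/setP => v; rewrite pblock_preim inE eq_sym. Qed.

Lemma zero_part_PI : isPI zero_part.
Proof.
by apply: PI_pblock zero_part_partition _ => u; left; apply: zero_part_points.
Qed.

Lemma zero_part_nonunit : 0 < n -> ~~ isUnit zero_part.
Proof.
move=> n_gt0; apply/isUnitP => -[g zero_g].
by have := perm_part_points g (inl (Ordinal n_gt0)); rewrite -zero_g zero_part_points.
Qed.

Lemma perm_inl_inj g : injective (perm_inl g).
Proof. by case=> [x|y] [x'|y'] //= [] // /perm_inj ->. Qed.

Lemma relstar_perm_part g a u v : isPI a ->
  relstar (perm_part g) a u v = (perm_inl g v \in pblock a (perm_inl g u)).
Proof.
move=> PIa; have pa := PI_partition PIa; have pg := perm_part_partition g.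
pose r w : pt n :=
  match w with inl (inl x) => inl (g x) | inl (inr y) => inl y | inr y => inr y end.
have rB u' : r (embB u') = u' by case: u'.
have rO u' : r (embO u') = perm_inl g u' by case: u'.
have r_genrel w1 w2 : genrel (perm_part g) a w1 w2 -> pblock a (r w1) = pblock a (r w2).
  case/(genrelE pg pa) => -[u1 [v1 [+ -> ->]]]; last by rewrite !rB => /(same_pblockT pa).
  have rA u' : r (embA u') = inl (g (perm_key g u')) by case: u' => //= y; rewrite permKV.
  by rewrite pblock_perm_part !rA => /eqP ->.
have connect_r w : connect (genrel (perm_part g) a) w (embB (r w)).
  case: w => [[x|y]|y]; rewrite ?connect0 //; apply: connect1.
  by apply: (@genrelA _ _ _ (inl x) (inr (g x))); rewrite // pblock_perm_part /= permK.
apply: (relstar_pblock (@perm_inl_inj g) pa).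
  by rewrite (connect_genrel_retract pa r_genrel connect_r) !rO.
rewrite (badpt_retract pa r_genrel connect_r) rO.
apply/existsP/pointsP => [[z /andP[/eqP gu_z]]|ua]; last first.
  by exists (embB (perm_inl g u)); rewrite rB eqxx; apply/singptB/pointsP.
case/(singptE pg pa) => -[u' u'P zE].
  by rewrite (negbTE (perm_part_points g u')) in u'P.
move/pointsP: u'P gu_z => u'a; rewrite zE rB u'a => ua.
by rewrite ua; move: (mem_pblockT pa (perm_inl g u)); rewrite ua inE => /eqP ->.
Qed.

Lemma pblock_star_perm_part g a u : isPI a ->
  pblock (star (perm_part g) a) u = perm_inl g @^-1: pblock a (perm_inl g u).
Proof. by move=> PIa; apply/setP => v; rewrite pblock_star relstar_perm_part ?inE. Qed.

Lemma star_perm_part g h : star (perm_part g) (perm_part h) = perm_part (g * h).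
Proof.
apply: star_eq (perm_part_partition _) _ => u v.
rewrite relstar_perm_part ?perm_part_PI // !pblock_perm_part.
have key u' : perm_key h (perm_inl g u') = g (perm_key (g * h) u').
  by case: u' => [x|y] //=; rewrite invMg permM permKV.
by rewrite !key (inj_eq (@perm_inj _ g)).
Qed.

Lemma star_perm_partVK g a :
  isPI a -> star (perm_part g^-1) (star (perm_part g) a) = a.
Proof.
move=> PIa; apply: star_eq (PI_partition PIa) _ => u v.
rewrite relstar_perm_part ?star_PI ?perm_part_PI // pblock_star relstar_perm_part //.
have inlK u' : perm_inl g (perm_inl g^-1 u') = u' by case: u' => //= x; rewrite permKV.
by rewrite !inlK.
Qed.

Lemma isUnit_star a b : isUnit a -> isUnit b -> isUnit (star a b).
Proof.
by move=> /isUnitP[g ->] /isUnitP[h ->]; apply/isUnitP; exists (g * h)%g;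
  rewrite star_perm_part.
Qed.

End PermPart.

Arguments zero_part {n}.

Section Points.
Variable n : nat.
Implicit Types (a b c : part n) (u v : pt n) (g : 'S_n).

Lemma points_starl a b x : isPI a -> inl x \in points a -> inl x \in points (star a b).
Proof.
move=> PIa xa; apply/badpt_points_star/singpt_badpt.
exact: (singptA _ (PI_partition PIa) xa).
Qed.

Lemma points_starr a b y : isPI b -> inr y \in points b -> inr y \in points (star a b).
Proof.
move=> PIb yb; apply/badpt_points_star/singpt_badpt.
exact: (singptB _ (PI_partition PIb) yb).
Qed.

Lemma points_star_inl a b x y : isPI a -> isPI b ->
  inr y \in pblock a (inl x) -> inl y \in points b -> inl x \in points (star a b).
Proof.
move=> PIa PIb xy yb; apply/badpt_points_star/existsP; exists (embB (inl y)).
rewrite (singptB _ (PI_partition PIb) yb) andbT.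
exact: connect1 (genrelA _ (PI_partition PIa) xy).
Qed.

Lemma points_star_inr a b y0 y : isPI a -> isPI b ->
  inr y0 \in points a -> inr y \in pblock b (inl y0) -> inr y \in points (star a b).
Proof.
move=> PIa PIb y0a y0y; apply/badpt_points_star/existsP; exists (embA (inr y0)).
rewrite (singptA _ (PI_partition PIa) y0a) andbT.
have pb := PI_partition PIb.
have yy0 : inl y0 \in pblock b (inr y) by rewrite (same_pblockT pb y0y) mem_pblockT.
exact: connect1 (genrelB _ pb yy0).
Qed.

Lemma PI_cross_block a : isPI a -> a != zero_part ->
  exists x y, inr y \in pblock a (inl x).
Proof.
move=> PIa nz; have pa := PI_partition PIa.
have /existsP[u /(PI_line PIa)[[x ux] [y uy]]] : [exists u, u \notin points a].
  apply: contraR nz => /existsPn all_points.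
  apply/eqP/eq_partitionT => // [|u v]; first exact: zero_part_partition.
  by have /negPn/pointsP -> := all_points u; have /pointsP -> := zero_part_points u.
by exists x, y; rewrite (same_pblockT pa ux).
Qed.

Lemma points_star_perm_part g a u :
  isPI a -> perm_inl g u \in points a -> u \in points (star (perm_part g) a).
Proof.
move=> PIa /pointsP ua; apply/pointsP/setP => v.
by rewrite pblock_star_perm_part // ua !inE (inj_eq (@perm_inl_inj _ g)).
Qed.

Lemma points_star_proper a : isPI a -> a != zero_part -> points a != set0 ->
  exists g, points a \proper points (star a (star (perm_part g) a)).
Proof.
move=> PIa nz /set0Pn[u0 u0a]; have pa := PI_partition PIa.
have [x [y xy]] := PI_cross_block PIa nz.
have yx : inl x \in pblock a (inr y) by rewrite -eq_pblockT // eq_sym eq_pblockT.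
have PIga g : isPI (star (perm_part g) a) by apply: star_PI (perm_part_PI g) PIa.
(* Points of a stay points of the product; a transposition g moving a point of a
   onto an end of the line through x and y' makes that line end in a point. *)
suff [g [u ua uga]] : exists g, exists2 u, u \notin points a &
    u \in points (star a (star (perm_part g) a)).
  exists g; apply/properP; split; last by exists u.
  apply/subsetP => -[x' | y'] ?; first exact: points_starl.
  exact/points_starr/points_star_perm_part.
case: u0 u0a => [x0|y0] u0a.
  exists (tperm y x0), (inl x); first by apply: contraL xy => /pointsP ->; rewrite inE.
  by apply: points_star_inl xy (points_star_perm_part _ _) => //=; rewrite tpermL.
exists (tperm y0 x), (inr y); first by apply: contraL yx => /pointsP ->; rewrite inE.
by apply: points_star_inr u0a _; rewrite // pblock_star_perm_part // inE /= tpermL.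
Qed.

End Points.

Section Units.
Variable n : nat.
Implicit Types (a b : part n) (u v : pt n).

Lemma PI_isUnit a : isPI a -> (forall x, inl x \notin points a) ->
  (forall x z, inl z \in pblock a (inl x) -> z = x) -> isUnit a.
Proof.
move=> PIa X_lines X_uniq; have pa := PI_partition PIa.
have ex x : exists y, inr y \in pblock a (inl x) by case: (PI_line PIa (X_lines x)).
pose m x := xchoose (ex x).
have mP x : inr (m x) \in pblock a (inl x) := xchooseP (ex x).
have m_inj : injective m.
  move=> x z mxz; apply: X_uniq; have := mP z; rewrite -mxz => mz.
  by rewrite -(same_pblockT pa mz) (same_pblockT pa (mP x)) mem_pblockT.
pose p := perm m_inj.
have blockE u : pblock a u = pblock a (inl (perm_key p u)).
  case: u => [x|y] //=; have := mP (p^-1 y)%g.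
  by rewrite -(permE m_inj) permKV => /(same_pblockT pa).
apply/isUnitP; exists p; apply: (eq_partitionT pa (perm_part_partition p)) => u v.
rewrite pblock_perm_part blockE -(eq_pblockT pa) [pblock a v]blockE (eq_pblockT pa).
by apply/idP/eqP => [/X_uniq -> | ->]; rewrite ?mem_pblockT.
Qed.

Lemma isUnit_starl a b : isPI a -> isPI b -> isUnit (star a b) -> isUnit a.
Proof.
move=> PIa PIb /isUnitP[g ab_g]; apply: PI_isUnit => // [x | x z xz].
  by apply: contraNN (perm_part_points g (inl x)) => xa; rewrite -ab_g points_starl.
have nbad : ~~ badpt a b (embO (inl x)).
  by apply: contraNN (perm_part_points g (inl x)) => /badpt_points_star; rewrite ab_g.
have : inl z \in pblock (star a b) (inl x).
  rewrite pblock_star /relstar nbad andbT.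
  by rewrite (connect1 (genrelA b (PI_partition PIa) xz)) orbT.
by rewrite ab_g pblock_perm_part => /eqP.
Qed.

End Units.

Section Factorisation.
Variable n : nat.
Implicit Types (a : part n) (u v : pt n).
Variables (x z : 'I_n).
Hypothesis zx : z != x.

Definition merge_key u : option 'I_n :=
  match u with
  | inl v => Some (if v == x then z else v)
  | inr v => if v == x then None else Some v
  end.

(* Blocks {v, v'} for v other than x and z, the block {x, z, z'}, and the point {x'}. *)
Definition merge_part : part n := preim_partition merge_key setT.

Definition isolate_key a u : option {set pt n} :=
  if u == inl x then None else Some (pblock a u).

Definition isolate_part a : part n := preim_partition (isolate_key a) setT.

Lemma merge_keyN u : (merge_key u == None) = (u == inr x).
Proof. by case: u => //= v; rewrite (inj_eq inr_inj); case: (v == x). Qed.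

Lemma merge_key_line u k :
  merge_key u = Some k -> (inl k \in pblock merge_part u) && (inr k \in pblock merge_part u).
Proof.
have kx : merge_key u = Some k -> k != x.
  by case: u => v /=; case: eqVneq => // vx [<-].
by move=> uk; rewrite !pblock_preim uk /= (negbTE (kx uk)) eqxx.
Qed.

Lemma merge_part_points u : u \in points merge_part -> u = inr x.
Proof.
move/pointsP=> pu; case uk: (merge_key u) => [k|]; last by apply/eqP; rewrite -merge_keyN uk.
by move: (merge_key_line uk); rewrite pu !inE => /andP[/eqP <-].
Qed.

Lemma inr_points_merge_part : inr x \in points merge_part.
Proof.
apply/pointsP/setP => v; rewrite pblock_preim inE /= eqxx eq_sym.
by rewrite -merge_keyN.
Qed.

Lemma merge_part_PI : isPI merge_part.
Proof.
apply: PI_pblock (preim_partitionP _ _) _ => u.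
case uk: (merge_key u) => [k|].
  by right; case/andP: (merge_key_line uk) => ? ?; split; exists k.
by left; move/eqP: uk; rewrite merge_keyN => /eqP ->; apply: inr_points_merge_part.
Qed.

Definition merge_retract (w : vt n) : pt n :=
  match w with
  | inl (inl v) => inl (if v == x then z else v)
  | inl (inr v) => inl v
  | inr v => inr v
  end.

Lemma merge_retractB u : merge_retract (embB u) = u.
Proof. by case: u. Qed.

Lemma connect_merge_retract b w :
  connect (genrel merge_part b) w (embB (merge_retract w)).
Proof.
case: w => [[v|v]|v]; rewrite ?connect0 //; apply: connect1.
apply: (@genrelA _ _ _ (inl v) (inr (if v == x then z else v))).
  exact: preim_partitionP.
rewrite pblock_preim /=.
by case: (eqVneq v x) => [vx|vx]; [subst v | ]; rewrite ?eqxx ?(negbTE zx) ?(negbTE vx).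
Qed.

Variable a : part n.
Hypotheses (PIa : isPI a) (xz : inl z \in pblock a (inl x)).

Let pa := PI_partition PIa.

Lemma mem_isolate_part u v : u != inl x -> v != inl x ->
  (v \in pblock (isolate_part a) u) = (v \in pblock a u).
Proof.
by move=> ux vx; rewrite pblock_preim /isolate_key (negbTE ux) (negbTE vx)
  (inj_eq (@Some_inj _)) eq_pblockT.
Qed.

Lemma inl_points_isolate_part : inl x \in points (isolate_part a).
Proof.
apply/pointsP/setP => v; rewrite pblock_preim inE /isolate_key eqxx.
by case: (v == inl x).
Qed.

Lemma inl_notin_points : inl x \notin points a.
Proof. by apply: contraL xz => /pointsP ->; rewrite inE. Qed.

Lemma points_isolate_part u :
  u != inl x -> u \in points a -> u \in points (isolate_part a).
Proof.
move=> ux /pointsP ua; apply/pointsP/setP => v; rewrite inE.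
have [->|vx] := eqVneq v (inl x); last by rewrite mem_isolate_part // ua inE.
by rewrite eq_sym (negbTE ux) pblock_preim /isolate_key eqxx (negbTE ux).
Qed.

Lemma isolate_part_points u :
  u != inl x -> u \in points (isolate_part a) -> u \in points a.
Proof.
move=> ux /pointsP tu; apply/pointsP/setP => v; rewrite inE.
apply/idP/eqP => [uv|->]; last exact: mem_pblockT.
have [vx|vx] := eqVneq v (inl x); last by move: uv; rewrite -mem_isolate_part // tu inE => /eqP.
rewrite vx in uv; have ux_eq := same_pblockT pa uv.
have [_ [y xy]] := PI_line PIa inl_notin_points.
have zx_inl : inl z != inl x :> pt n by rewrite (inj_eq inl_inj).
have : inl z \in pblock (isolate_part a) u by rewrite mem_isolate_part // -ux_eq.
have : inr y \in pblock (isolate_part a) u by rewrite mem_isolate_part // -ux_eq.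
by rewrite tu !inE => /eqP <-.
Qed.

Lemma isolate_part_PI : isPI (isolate_part a).
Proof.
apply: PI_pblock (preim_partitionP _ _) _ => u.
have [->|ux] := eqVneq u (inl x); first by left; apply: inl_points_isolate_part.
have [ua|/(PI_line PIa)[[x1 ux1] [y uy]]] := boolP (u \in points a).
  by left; apply: points_isolate_part.
right; split; last by exists y; rewrite mem_isolate_part.
have [x1x|x1x] := eqVneq x1 x; last by exists x1; rewrite mem_isolate_part // (inj_eq (@inl_inj _ _)).
exists z; rewrite mem_isolate_part //.
by rewrite -(same_pblockT pa ux1) x1x.
Qed.

Lemma isolate_key_retractA u : isolate_key a (merge_retract (embA u)) =
  omap (fun k => pblock a (inl k)) (merge_key u).
Proof.
case: u => v; rewrite /= /isolate_key (inj_eq inl_inj);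
by case: (eqVneq v x) => [vx|vx]; [subst v | ]; rewrite ?eqxx ?(negbTE zx) ?(negbTE vx).
Qed.

Lemma isolate_key_retractO u : isolate_key a (merge_retract (embO u)) = Some (pblock a u).
Proof.
case: u => v //; rewrite /= /isolate_key (inj_eq inl_inj).
case: (eqVneq v x) => [vx|vx]; last by rewrite (negbTE vx).
by subst v; rewrite (negbTE zx) (same_pblockT pa xz).
Qed.

Lemma merge_retract_genrel w1 w2 : genrel merge_part (isolate_part a) w1 w2 ->
  pblock (isolate_part a) (merge_retract w1) = pblock (isolate_part a) (merge_retract w2).
Proof.
have pi := PI_partition isolate_part_PI.
case/(genrelE (PI_partition merge_part_PI) pi) => -[u [v [+ -> ->]]].
  by rewrite pblock_preim => /eqP uv; apply/eqP; rewrite eq_pblock_preim !isolate_key_retractA uv.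
by rewrite !merge_retractB => /(same_pblockT pi).
Qed.

Lemma star_merge_isolate_part : star merge_part (isolate_part a) = a.
Proof.
(* Every v is joined to v'' except x, which is joined to z''; and isolate_part a
   keeps z'' in the a-block of z, which is that of x. *)
have pm := PI_partition merge_part_PI; have pi := PI_partition isolate_part_PI.
have conn := connect_genrel_retract pi merge_retract_genrel (connect_merge_retract _).
have bad := badpt_retract pi merge_retract_genrel (connect_merge_retract _).
apply: star_eq (pa) _ => u v; apply: (relstar_pblock (@inj_id _) pa).
  by rewrite conn !eq_pblock_preim !isolate_key_retractO (inj_eq (@Some_inj _)).
rewrite bad; apply/existsP/idP => [[w /andP[]]|ua]; last first.
  have ux : u != inl x by apply: contraTneq ua => ->; apply: inl_notin_points.
  exists (embB u); rewrite merge_retractB eq_pblock_preim isolate_key_retractO.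
  rewrite /isolate_key (negbTE ux) eqxx.
  exact/singptB/points_isolate_part.
rewrite eq_pblock_preim isolate_key_retractO => /eqP uw /(singptE pm pi)[] [u' u'P wE].
  by move: uw; rewrite wE (merge_part_points u'P) /= /isolate_key eqxx.
move: uw; rewrite wE merge_retractB /isolate_key; case: eqVneq => // u'x [uu'].
have /pointsP u'a := isolate_part_points u'x u'P.
by move: (mem_pblockT pa u); rewrite uu' u'a inE => /eqP ->; apply/pointsP.
Qed.

End Factorisation.

Section CompletelyIsolated.
Variables (n : nat) (T : {set part n}).
Hypothesis T_ci : compl_isolated_subsemigroup T.
Implicit Types (a b : part n) (g : 'S_n).

Lemma mem_PI a : a \in T -> isPI a.
Proof. by case: T_ci => /subsetP T_PI _ _ _ /T_PI; rewrite inE. Qed.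

Lemma mem_star a b : a \in T -> b \in T -> star a b \in T.
Proof. by case: T_ci => _ _ T_star _; apply: T_star. Qed.

Lemma mem_star_isolated a b :
  isPI a -> isPI b -> star a b \in T -> (a \in T) || (b \in T).
Proof. by case: T_ci => _ _ _ T_iso PIa PIb; apply: T_iso; rewrite inE. Qed.

Lemma mem_star_same a b : isPI a -> isPI b ->
  (a \in T) = (b \in T) -> (star a b \in T) = (a \in T).
Proof.
move=> PIa PIb ab; have [Ta|nTa] := boolP (a \in T); first by rewrite mem_star -?ab.
by apply: contraNF nTa => /(mem_star_isolated PIa PIb); rewrite -ab orbb.
Qed.

Lemma mem_perm_part g : (perm_part g \in T) = (perm_part 1 \in T).
Proof.
apply: (isolated_mulg_closed_const (P := fun g => perm_part g \in T)) => {g} g h.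
  by rewrite -star_perm_part; apply: mem_star.
by rewrite -star_perm_part; apply: mem_star_isolated; apply: perm_part_PI.
Qed.

Lemma mem_star_perm_part g a : isPI a -> (star (perm_part g) a \in T) = (a \in T).
Proof.
move=> PIa; have PIga := star_PI (perm_part_PI g) PIa.
have Tg := mem_perm_part g; have Tgi := mem_perm_part g^-1.
have [T1|nT1] := boolP (perm_part 1 \in T).
  apply/idP/idP => [Tga|Ta]; last by rewrite mem_star ?Tg.
  by rewrite -(star_perm_partVK g PIa) mem_star ?Tgi.
apply/idP/idP => [/(mem_star_isolated (perm_part_PI g) PIa)|].
  by rewrite Tg (negbTE nT1).
rewrite -{1}(star_perm_partVK g PIa) => /(mem_star_isolated (perm_part_PI _) PIga).
by rewrite Tgi (negbTE nT1).
Qed.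

Lemma mem_pointed a : isPI a -> points a != set0 -> (a \in T) = (zero_part \in T).
Proof.
have [k] := ubnP #|~: points a|; elim: k a => // k IH a lt_k PIa pta.
have [-> //|nz] := eqVneq a zero_part.
have [g more] := points_star_proper PIa nz pta.
have PIga := star_PI (perm_part_PI g) PIa.
rewrite -(mem_star_same PIa PIga (esym (mem_star_perm_part g PIa))).
have fewer : #|~: points (star a (star (perm_part g) a))| < #|~: points a|.
  by apply: proper_card; rewrite properC.
apply: IH; first exact: leq_trans fewer _.
  exact: star_PI.
case/set0Pn: pta => u ua; apply/set0Pn; exists u.
by move/proper_sub/subsetP: more; apply.
Qed.

Lemma mem_nonunit a : isPI a -> ~~ isUnit a -> (a \in T) = (zero_part \in T).
Proof.
move=> PIa nu; have [pta|] := boolP (points a != set0); first exact: mem_pointed.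
rewrite negbK => /eqP no_points.
have [/existsP[x /existsP[z /andP[zx xz]]] | X_uniq] :=
  boolP [exists x, exists z, (z != x) && (inl z \in pblock a (inl x))].
  have PIm := merge_part_PI zx; have PIi := isolate_part_PI zx PIa xz.
  have Tm : (merge_part x z \in T) = (zero_part \in T).
    by apply: (mem_pointed PIm); apply/set0Pn; exists (inr x); apply: inr_points_merge_part.
  rewrite -(star_merge_isolate_part zx PIa xz) mem_star_same // Tm.
  apply/esym/(mem_pointed PIi)/set0Pn; exists (inl x).
  exact: inl_points_isolate_part.
case/negP: nu; apply: PI_isUnit => // [x | x z xz]; first by rewrite no_points inE.
move/existsPn/(_ x)/existsPn/(_ z): X_uniq.
by rewrite xz andbT negbK => /eqP.
Qed.

Lemma compl_isolated_memE a : isPI a ->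
  (a \in T) = (if isUnit a then perm_part 1 \in T else zero_part \in T).
Proof.
move=> PIa; case: ifPn => [/isUnitP[g ->]|nu]; first exact: mem_perm_part.
exact: mem_nonunit.
Qed.

End CompletelyIsolated.

Section Classification.
Variable n : nat.
Implicit Types (a b : part n) (P : pred (part n)).

Lemma compl_isolated_PIpred P : (exists2 a, isPI a & P a) ->
  (forall a b, isPI a -> isPI b -> P a -> P b -> P (star a b)) ->
  (forall a b, isPI a -> isPI b -> P (star a b) -> P a || P b) ->
  compl_isolated_subsemigroup [set a in PIset n | P a].
Proof.
move=> [a0 PIa0 Pa0] Pstar Piso; split.
- by apply/subsetP => a; rewrite inE => /andP[].
- by apply/set0Pn; exists a0; rewrite !inE PIa0.
- move=> a b; rewrite !inE => /andP[PIa Pa] /andP[PIb Pb].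
  by rewrite star_PI ?Pstar.
- move=> a b; rewrite !inE => PIa PIb /andP[_ Pab].
  by rewrite PIa PIb Piso.
Qed.

Lemma compl_isolated_PIset : compl_isolated_subsemigroup (PIset n).
Proof.
have -> : PIset n = [set a in PIset n | predT a] by apply/setP => a; rewrite !inE andbT.
by apply: compl_isolated_PIpred => //; exists (perm_part 1); rewrite ?perm_part_PI.
Qed.

Lemma compl_isolated_units : compl_isolated_subsemigroup [set a in PIset n | isUnit a].
Proof.
apply: compl_isolated_PIpred => [|a b _ _|a b PIa PIb /(isUnit_starl PIa PIb) ->] //.
  by exists (perm_part 1); [apply: perm_part_PI | apply/isUnitP; exists 1%g].
exact: isUnit_star.
Qed.

Lemma compl_isolated_nonunits : 0 < n ->
  compl_isolated_subsemigroup [set a in PIset n | ~~ isUnit a].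
Proof.
move=> n_gt0; apply: compl_isolated_PIpred => [|a b PIa PIb nua _|a b _ _].
- by exists zero_part; [apply: zero_part_PI | apply: zero_part_nonunit].
- by apply: contra nua; apply: isUnit_starl.
- by rewrite -negb_and; apply: contra => /andP[]; apply: isUnit_star.
Qed.

Lemma compl_isolated_setE T : compl_isolated_subsemigroup T ->
  T = [set a in PIset n | if isUnit a then perm_part 1 \in T else zero_part \in T].
Proof.
move=> T_ci; apply/setP => a; rewrite !inE.
have [PIa|nPIa] := boolP (isPI a); first exact: compl_isolated_memE.
by apply: contraNF nPIa; apply: mem_PI.
Qed.

End Classification.

Theorem mainTheorem9 (n : nat) (hn : 1 < n) (T : {set part n}) :
  compl_isolated_subsemigroup T <->
  [\/ T = PIset n,
      T = [set a in PIset n | isUnit a]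
    | T = [set a in PIset n | ~~ isUnit a]].
Proof.
split=> [T_ci|]; last first.
  case=> ->; [exact: compl_isolated_PIset | exact: compl_isolated_units |].
  exact/compl_isolated_nonunits/ltnW.
have [_ T_neq0 _ _] := T_ci; move: T_neq0.
rewrite (compl_isolated_setE T_ci).
case: (perm_part 1 \in T); case: (zero_part \in T) => T_neq0;
  [apply: Or31 | apply: Or32 | apply: Or33 | case/set0Pn: T_neq0 => a];
  try apply/setP => a; by rewrite !inE; case: isUnit; rewrite ?andbT ?andbF.
Qed.
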